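(* Let $b>3$ be an integer. Then there is at most one prime number that is antipalindromic in base $b$, namely: if $p$ is a prime that is antipalindromic in base $b$, then $p=\frac{b-1}{2}$.
   Context: For an integer $b\ge 2$, every natural number $m$ has a unique base-$b$ expansion $m=a_nb^n+\dots+a_1b+a_0$ with $a_0,\dots,a_n\in\{0,1,\dots,b-1\}$ and $a_n\neq 0$. The number $m$ is antipalindromic in base $b$ if $a_j=b-1-a_{n-j}$ for all $j\in\{0,1,\dots,n\}$. *)

From mathcomp Require Import all_boot.

(* Base-b expansion of m >= 1: m = sum_{j=0}^{n} a_j b^j with n = trunc_log b m
   (the largest n with b^n <= m), and the j-th digit a_j = (m %/ b^j) %% b. *)
Definition digit (b m j : nat) : nat := (m %/ b ^ j) %% b.
Definition ndigits_top (b m : nat) : nat := trunc_log b m.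

Definition antipalindromic (b m : nat) : Prop :=
  0 < m /\
  forall j, j <= ndigits_top b m ->
    digit b m j = b - 1 - digit b m (ndigits_top b m - j).

(* Since b = 1 (mod b - 1), every number is congruent to its digit sum modulo
   b - 1.  The digits of an antipalindromic number with n + 1 digits pair up to
   sums b - 1, so twice its digit sum is (n + 1)(b - 1); hence b - 1 divides 2p.
   A prime p >= b cannot divide b - 1, so it is coprime to it and b - 1 | 2,
   i.e. b <= 3.  So p is a single digit a, and a = b - 1 - a. *)
From mathcomp Require Import all_boot.
From mathcomp Require Import zify.
Set Implicit Arguments.
Unset Strict Implicit.

Lemma digit_lt (b m j : nat) : 0 < b -> digit b m j < b.
Proof. exact: ltn_pmod. Qed.

Lemma antipalindromic_digit_sum (b m : nat) : 0 < b -> antipalindromic b m ->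
  (\sum_(j < (ndigits_top b m).+1) digit b m j).*2
    = (ndigits_top b m).+1 * b.-1.
Proof.
move=> b_gt0 [_ hdig].
rewrite -addnn {1}(reindex_inj rev_ord_inj) -big_split /=.
rewrite (eq_bigr (fun=> b.-1)) ?sum_nat_const ?card_ord // => i _.
rewrite subSS (hdig i (ltn_ord i)).
have := digit_lt m (ndigits_top b m - i) b_gt0; lia.
Qed.

Lemma digit_sum_modn (b N m : nat) : 0 < b -> m < b ^ N ->
  m = \sum_(j < N) digit b m j %[mod b.-1].
Proof.
case: b => // d _ /=; elim: N m => [|N IH] m hm.
  by move: hm; rewrite expn0 ltnS leqn0 => /eqP->; rewrite big_ord0.
rewrite big_ord_recl /digit expn0 divn1.
under eq_bigr => i _ do rewrite lift0 expnS divnMA.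
have hlt : m %/ d.+1 < d.+1 ^ N by rewrite ltn_divLR // mulnC -expnS.
rewrite -modnDmr -(IH _ hlt) modnDmr {1}(divn_eq m d.+1) mulnSr -addnA.
by rewrite modnMDl addnC.
Qed.

Lemma antipalindromic_dvdn (b m : nat) : 1 < b -> antipalindromic b m ->
  b.-1 %| m.*2.
Proof.
move=> b_gt1 hm; have b_gt0 := ltnW b_gt1.
have m_lt : m < b ^ (ndigits_top b m).+1 by apply: trunc_log_ltn.
rewrite /dvdn -muln2 -modnMml (digit_sum_modn b_gt0 m_lt) modnMml muln2.
by rewrite antipalindromic_digit_sum // modnMl.
Qed.

Lemma antipalindromic_small (b m : nat) : antipalindromic b m -> m < b ->
  m.*2 = b - 1.
Proof.
move=> [_ hdig] m_lt.
have top0 : ndigits_top b m = 0.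
  by apply/eqP; rewrite trunc_log_eq0; apply/orP; right; lia.
have := hdig 0 (leq0n _).
by rewrite top0 subn0 /digit expn0 divn1 modn_small //; lia.
Qed.

Theorem mainTheorem5 (b p : nat) : 3 < b -> prime p -> antipalindromic b p ->
  p.*2 = b - 1.
Proof.
move=> b_gt3 p_prime hp.
have [p_lt | b_le] := ltnP p b; first exact: antipalindromic_small.
have hdv : b.-1 %| p * 2 by rewrite muln2 antipalindromic_dvdn //; lia.
have [cop | ncop] := boolP (coprime b.-1 p).
  have : b.-1 %| 2 by rewrite -(Gauss_dvdr 2 cop).
  by move/(dvdn_leq (isT : 0 < 2)); lia.
have : p %| b.-1 by move: ncop; rewrite coprime_sym prime_coprime // negbK.
by move/dvdn_leq; lia.
Qed.
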